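(* If two topological coarse spaces $X$ and $Y$ are coarsely equivalent, then $\mathrm{Ends}(X)$ is homeomorphic to $\mathrm{Ends}(Y)$.
   Context: For a family $\mathcal U$ of subsets of $X$ and $A\subset X$, $st(A,\mathcal U)$ is the union of all $U\in\mathcal U$ meeting $A$; $st(\mathcal U,\mathcal V)=\{st(U,\mathcal V):U\in\mathcal U\}$. A large scale space is a set with a family of covers (uniformly bounded covers) closed under $st(\cdot,\cdot)$ and under passing to refinements; bounded sets are subsets of elements of uniformly bounded covers. A topological coarse space is a large scale space with a topology such that some uniformly bounded cover consists of open sets, and the union of two bounded sets is bounded. $A\subset X$ is coarsely clopen if $st(A,\mathcal U)\cap st(X\setminus A,\mathcal U)$ is bounded for every uniformly bounded $\mathcal U$. An end is a family of unbounded open coarsely clopen subsets of $X$, maximal among such families closed under finite intersections; $\mathrm{Ends}(X)$ carries the topology in which, for open coarsely clopen $U$, the sets $\{E: U\in E\}$ form a basis (the subspace topology from $X\cup\mathrm{Ends}(X)$, where $Y$ is open iff $Y\cap X$ is open and each end $E\in Y$ has an open coarsely clopen $U\in E$ with $U\cup\{E':U\in E'\}\subset Y$). A map $f:X\to Y$ is coarse if preimages of bounded sets are bounded and large scale continuous if images of uniformly bounded covers are uniformly bounded; $f,g:X\to Y$ are close if there is a uniformly bounded cover $\mathcal U$ of $Y$ with $f(x)\in st(g(x),\mathcal U)$ for all $x$. $X,Y$ are coarsely equivalent if there are coarse large scale continuous $f:X\to Y$, $g:Y\to X$ with $g\circ f$ close to $\mathrm{id}_X$ and $f\circ g$ close to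 $\mathrm{id}_Y$. *)

Set Implicit Arguments.

Definition pset (X : Type) := X -> Prop.

Section Defs.
Variable X : Type.

Definition family := pset (pset X).

Definition is_cover (U : family) : Prop :=
  forall x : X, exists A, U A /\ A x.

Definition st (A : pset X) (U : family) : pset X :=
  fun x => exists B, U B /\ (exists a, A a /\ B a) /\ B x.

Definition st_fam (U V : family) : family :=
  fun C => exists A, U A /\ C = st A V.

Definition refines (U V : family) : Prop :=
  forall A, U A -> exists B, V B /\ (forall x, A x -> B x).

(* a large scale structure: a family of covers (the uniformly bounded covers)
   closed under st(.,.) and under passing to refinements *)
Definition large_scale (LS : pset family) : Prop :=
  (forall U, LS U -> is_cover U) /\
  (forall U V, LS U -> LS V -> LS (st_fam U V)) /\
  (forall U V, LS V -> is_cover U -> refines U V -> LS U).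

Definition bounded (LS : pset family) (B : pset X) : Prop :=
  exists U, LS U /\ exists A, U A /\ (forall x, B x -> A x).

Definition unif_bounded_fam (LS : pset family) (U : family) : Prop :=
  exists V, LS V /\ refines U V.

Definition is_topology (op : pset X -> Prop) : Prop :=
  op (fun _ => False) /\ op (fun _ => True) /\
  (forall A B, op A -> op B -> op (fun x => A x /\ B x)) /\
  (forall F : family, (forall A, F A -> op A) ->
     op (fun x => exists A, F A /\ A x)).

Definition top_coarse_space (LS : pset family) (op : pset X -> Prop) : Prop :=
  large_scale LS /\ is_topology op /\
  (exists U, LS U /\ forall A, U A -> op A) /\
  (forall A B, bounded LS A -> bounded LS B -> bounded LS (fun x => A x \/ B x)).

Definition coarsely_clopen (LS : pset family) (A : pset X) : Prop :=
  forall U, LS U ->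
    bounded LS (fun x => st A U x /\ st (fun y => ~ A y) U x).

Definition end_candidate (LS : pset family) (op : pset X -> Prop) (A : pset X) :=
  ~ bounded LS A /\ op A /\ coarsely_clopen LS A.

Definition end_prefamily (LS : pset family) (op : pset X -> Prop) (E : family) :=
  (forall A, E A -> end_candidate LS op A) /\
  (forall A B, E A -> E B -> E (fun x => A x /\ B x)).

Definition is_end (LS : pset family) (op : pset X -> Prop) (E : family) :=
  end_prefamily LS op E /\
  (forall F, end_prefamily LS op F -> (forall A, E A -> F A) ->
     forall A, F A -> E A).

Definition Ends (LS : pset family) (op : pset X -> Prop) : Type :=
  { E : family | is_end LS op E }.

Definition ends_open (LS : pset family) (op : pset X -> Prop)
  (W : pset (Ends LS op)) : Prop :=
  forall E, W E -> exists U, op U /\ coarsely_clopen LS U /\ proj1_sig E U /\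
     (forall E' : Ends LS op, proj1_sig E' U -> W E').

End Defs.

Definition coarse_map (X Y : Type) (LSX : pset (family X)) (LSY : pset (family Y))
  (f : X -> Y) : Prop :=
  forall B, bounded LSY B -> bounded LSX (fun x => B (f x)).

Definition image_fam (X Y : Type) (f : X -> Y) (U : family X) : family Y :=
  fun C => exists A, U A /\ C = (fun y => exists x, A x /\ f x = y).

Definition ls_continuous (X Y : Type) (LSX : pset (family X)) (LSY : pset (family Y))
  (f : X -> Y) : Prop :=
  forall U, LSX U -> unif_bounded_fam LSY (image_fam f U).

Definition close_maps (X Y : Type) (LSY : pset (family Y)) (f g : X -> Y) : Prop :=
  exists U, LSY U /\ forall x, st (fun y => y = g x) U (f x).

Definition coarsely_equivalent (X Y : Type) (LSX : pset (family X))
  (LSY : pset (family Y)) : Prop :=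
  exists (f : X -> Y) (g : Y -> X),
    coarse_map LSX LSY f /\ ls_continuous LSX LSY f /\
    coarse_map LSY LSX g /\ ls_continuous LSY LSX g /\
    close_maps LSX (fun x => g (f x)) (fun x => x) /\
    close_maps LSY (fun y => f (g y)) (fun y => y).

Definition continuous_wrt (S T : Type) (opS : pset S -> Prop) (opT : pset T -> Prop)
  (h : S -> T) : Prop :=
  forall W, opT W -> opS (fun s => W (h s)).

Definition homeomorphic (S T : Type) (opS : pset S -> Prop) (opT : pset T -> Prop)
  : Prop :=
  exists (h : S -> T) (k : T -> S),
    (forall s, k (h s) = s) /\ (forall t, h (k t) = t) /\
    continuous_wrt opS opT h /\ continuous_wrt opT opS k.

(* Let f : X -> Y and g : Y -> X be a coarse equivalence.  An end E of X is
   sent to the family phi(E) of admissible sets V of Y (unbounded, open,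
   coarsely clopen) such that some A in E lies in the preimage f^-1(V) up to a
   bounded set.  Hence phi_f and phi_g are
     mutually inverse homeomorphisms. *)
From Stdlib Require Import Classical FunctionalExtensionality PropExtensionality ProofIrrelevance.
Set Implicit Arguments.

Section Space.
Variable X : Type.
Variable LS : pset (family X).
Variable op : pset X -> Prop.
Hypothesis hX : top_coarse_space LS op.

Lemma st_intro (A : pset X) U B a x : U B -> A a -> B a -> B x -> st A U x.
Proof. intros HB Aa Ba Bx. exists B. repeat split; eauto. Qed.

Lemma bnd_sub {A B : pset X} :
  bounded LS A -> (forall x, B x -> A x) -> bounded LS B.
Proof. intros [U [HU [C [HC HA]]]] H. exists U; split; auto. exists C; auto. Qed.

Lemma bnd_cover {A B C : pset X} :
  bounded LS B -> bounded LS C -> (forall x, A x -> B x \/ C x) -> bounded LS A.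
Proof.
  intros HB HC H. destruct hX as [_ [_ [_ Hunion]]].
  exact (bnd_sub (Hunion _ _ HB HC) H).
Qed.

Lemma ls_cover U : LS U -> is_cover U.
Proof. destruct hX as [[H _] _]. apply H. Qed.

Lemma ls_st U V : LS U -> LS V -> LS (st_fam U V).
Proof. destruct hX as [[_ [H _]] _]. apply H. Qed.

Lemma st_sup (A : pset X) U : LS U -> forall x, A x -> st A U x.
Proof. intros HU x Ax. destruct (ls_cover HU x) as [B [HB Bx]]. eapply st_intro; eauto. Qed.

Lemma op_ext (A B : pset X) : op A -> (forall x, A x <-> B x) -> op B.
Proof.
  intros HA E. replace B with A; auto.
  apply functional_extensionality; intro x; apply propositional_extensionality; auto.
Qed.

Lemma op_inter (A B : pset X) : op A -> op B -> op (fun x => A x /\ B x).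
Proof. destruct hX as [_ [[_ [_ [H _]]] _]]. apply H. Qed.

Lemma cc_inter (A B : pset X) : coarsely_clopen LS A -> coarsely_clopen LS B ->
  coarsely_clopen LS (fun x => A x /\ B x).
Proof.
  intros HA HB U HU. apply (bnd_cover (HA U HU) (HB U HU)).
  intros x [[C [HC [[a [[Aa Ba] Ca]] Cx]]] [D [HD [[b [nb Db]] Dx]]]].
  destruct (not_and_or _ _ nb) as [nAb | nBb]; [left | right];
    split; [apply st_intro with (B := C) (a := a) | apply st_intro with (B := D) (a := b)
           | apply st_intro with (B := C) (a := a) | apply st_intro with (B := D) (a := b)];
    auto.
Qed.

Lemma thick_open (U0 : family X) (C : pset X) : (forall B, U0 B -> op B) -> op (st C U0).
Proof.
  intros H. destruct hX as [_ [[_ [_ [_ Hunions]]] _]].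
  apply op_ext with (A := fun x => exists A, (U0 A /\ exists a, C a /\ A a) /\ A x).
  - apply Hunions. intros A [HA _]. auto.
  - intros x; split.
    + intros [B [[HB Ha] Bx]]. exists B; auto.
    + intros [B [HB [Ha Bx]]]. exists B; auto.
Qed.

Lemma thick_cc (U0 : family X) (C : pset X) : LS U0 -> coarsely_clopen LS C ->
  coarsely_clopen LS (st C U0).
Proof.
  intros H0 HC U HU. apply (bnd_sub (HC (st_fam U0 U) (ls_st H0 HU))).
  intros x [[B' [HB' [[y [[B [HB [[c [Cc Bc]] By]]] B'y]] B'x]]] [D [HD [[z [nz Dz]] Dx]]]].
  split.
  - apply st_intro with (B := st B U) (a := c).
    + exists B; auto.
    + auto.
    + apply st_sup; auto.
    + apply st_intro with (B := B') (a := y); auto.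
  - destruct (ls_cover H0 z) as [B2 [HB2 B2z]].
    apply st_intro with (B := st B2 U) (a := z).
    + exists B2; auto.
    + intros Cz. apply nz. apply st_intro with (B := B2) (a := z); auto.
    + apply st_intro with (B := D) (a := z); auto.
    + apply st_intro with (B := D) (a := z); auto.
Qed.

Lemma st_diff (U : family X) (C : pset X) : LS U -> coarsely_clopen LS C ->
  bounded LS (fun x => st C U x /\ ~ C x).
Proof.
  intros HU HC. apply (bnd_sub (HC U HU)).
  intros x [Hs nC]. split; auto. apply st_sup; auto.
Qed.

(* If h moves points only boundedly, a coarsely clopen V differs from
   h^-1(V) only on a bounded set: such points lie in st V /\ st (X \ V). *)
Lemma close_id_diff (h : X -> X) (V : pset X) :
  close_maps LS h (fun x => x) -> coarsely_clopen LS V ->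
  bounded LS (fun x => V x /\ ~ V (h x)).
Proof.
  intros [U [HU Hclose]] HV. apply (bnd_sub (HV U HU)).
  intros x [Vx nVhx]. destruct (Hclose x) as [B [HB [[y [-> By]] Bhx]]].
  split; eapply st_intro; eauto.
Qed.

Lemma end_meets (E : family X) (A : pset X) : is_end LS op E -> end_candidate LS op A ->
  (forall B, E B -> ~ bounded LS (fun x => A x /\ B x)) -> E A.
Proof.
  intros [[Hc Hi] Hmax] HA Hmeet.
  pose (Bs := fun B : pset X => E B \/ forall x, B x).
  assert (Bs_meet : forall B, Bs B -> ~ bounded LS (fun x => A x /\ B x)).
  { intros B [HB | HB]; auto. intros Hbd. apply (proj1 HA).
    apply (bnd_sub Hbd). intros x Ax; auto. }
  assert (Bs_inter : forall B1 B2, Bs B1 -> Bs B2 ->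
            exists B, Bs B /\ forall x, B x -> B1 x /\ B2 x).
  { intros B1 B2 [H1 | H1] [H2 | H2].
    - exists (fun x => B1 x /\ B2 x). split; auto. left; auto.
    - exists B1; split; [left | ]; auto.
    - exists B2; split; [left | ]; auto.
    - exists B1; split; [right | ]; auto. }
  (* the admissible sets containing A /\ B for some B in Bs form a family
     closed under intersections and extending E *)
  apply (Hmax (fun C => end_candidate LS op C /\
                        exists B, Bs B /\ forall x, A x /\ B x -> C x)).
  - split.
    + intros C [H _]; auto.
    + intros C1 C2 [[u1 [o1 c1]] [B1 [HB1 S1]]] [[u2 [o2 c2]] [B2 [HB2 S2]]].
      destruct (Bs_inter B1 B2 HB1 HB2) as [B [HB SB]].
      assert (HAB : forall x, A x /\ B x -> C1 x /\ C2 x).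
      { intros x [Ax Bx]. destruct (SB x Bx). auto. }
      split; [split; [|split] |].
      * intros Hbd. apply (Bs_meet B HB). exact (bnd_sub Hbd HAB).
      * apply op_inter; auto.
      * apply cc_inter; auto.
      * exists B; auto.
  - intros C HC. split; auto. exists C. split; [left; auto |]. intros x [_ Cx]; auto.
  - split; auto. exists (fun _ => True). split; [right; auto |]. intros x [Ax _]; auto.
Qed.

Lemma end_of_meets (E : family X) : end_prefamily LS op E ->
  (forall A, end_candidate LS op A ->
     (forall B, E B -> ~ bounded LS (fun x => A x /\ B x)) -> E A) ->
  is_end LS op E.
Proof.
  intros HE Habsorb. split; auto.
  intros F [Fc Fi] Hsub A FA. apply Habsorb; auto.
  intros B EB. exact (proj1 (Fc _ (Fi _ _ FA (Hsub _ EB)))).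
Qed.

Lemma end_sub_eq (E F : family X) : is_end LS op E -> end_prefamily LS op F ->
  (forall A, E A -> F A) -> F = E.
Proof.
  intros [_ Hmax] HF Hsub.
  apply functional_extensionality; intro A; apply propositional_extensionality.
  split; [apply (Hmax F HF Hsub) | apply Hsub].
Qed.

End Space.

Lemma preimage_cc (X Y : Type) (LSX : pset (family X)) (LSY : pset (family Y))
  (f : X -> Y) : ls_continuous LSX LSY f -> coarse_map LSX LSY f ->
  forall V, coarsely_clopen LSY V -> coarsely_clopen LSX (fun x => V (f x)).
Proof.
  intros fl fc V HV U HU. destruct (fl U HU) as [V' [HV' Href]].
  apply (bnd_sub (fc _ (HV V' HV'))).
  intros x [[B1 [HB1 [[a [Va B1a]] B1x]]] [B2 [HB2 [[b [nb B2b]] B2x]]]].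
  destruct (Href (fun y => exists x, B1 x /\ f x = y)) as [D1 [HD1 SD1]].
  { exists B1; auto. }
  destruct (Href (fun y => exists x, B2 x /\ f x = y)) as [D2 [HD2 SD2]].
  { exists B2; auto. }
  split.
  - apply st_intro with (B := D1) (a := f a); auto; apply SD1; eauto.
  - apply st_intro with (B := D2) (a := f b); auto; apply SD2; eauto.
Qed.

Section Transport.
Variables (X Y : Type) (LSX : pset (family X)) (opX : pset X -> Prop)
  (LSY : pset (family Y)) (opY : pset Y -> Prop).
Hypothesis hX : top_coarse_space LSX opX.
Hypothesis hY : top_coarse_space LSY opY.
Variables (f : X -> Y) (g : Y -> X).
Hypotheses (fc : coarse_map LSX LSY f) (fl : ls_continuous LSX LSY f)
  (gc : coarse_map LSY LSX g) (gl : ls_continuous LSY LSX g)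
  (cgf : close_maps LSX (fun x => g (f x)) (fun x => x))
  (cfg : close_maps LSY (fun y => f (g y)) (fun y => y)).

(* The preimage of an unbounded coarsely clopen set is unbounded:
   V lies in g^-1(f^-1 V) up to a bounded set. *)
Lemma unbounded_preimage (V : pset Y) :
  ~ bounded LSY V -> coarsely_clopen LSY V -> ~ bounded LSX (fun x => V (f x)).
Proof.
  intros Vu Vcc Hb. apply Vu.
  apply (bnd_cover hY (gc Hb) (close_id_diff cfg Vcc)).
  intros y Vy. destruct (classic (V (f (g y)))); [left | right]; auto.
Qed.

(* Every admissible B of X agrees, up to bounded sets, with f^-1(W) for some
   admissible W of Y: take the open thickening W of g^-1(B). *)
Lemma transport (B : pset X) : end_candidate LSX opX B -> exists W,
  end_candidate LSY opY W /\
  bounded LSX (fun x => B x /\ ~ W (f x)) /\ bounded LSY (fun y => W y /\ ~ B (g y)).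
Proof.
  intros [Bu [Bo Bcc]].
  destruct hY as [_ [_ [[U0 [HU0 HU0o]] _]]].
  pose proof (preimage_cc gl gc Bcc) as gcc.
  exists (st (fun y => B (g y)) U0).
  assert (HBW : bounded LSX (fun x => B x /\ ~ st (fun y => B (g y)) U0 (f x))).
  { apply (bnd_sub (close_id_diff cgf Bcc)).
    intros x [Bx nW]. split; auto. intros Bgfx. apply nW. apply (st_sup hY); auto. }
  split; [split; [|split] | split]; auto.
  - intros Hb. apply Bu. apply (bnd_cover hX (fc Hb) HBW).
    intros x Bx. destruct (classic (st (fun y => B (g y)) U0 (f x))); auto.
  - apply (thick_open hY); auto.
  - apply (thick_cc hY); auto.
  - apply (st_diff hY); auto.
Qed.

Definition phi_fam (E : family X) : family Y := fun V =>
  end_candidate LSY opY V /\ exists A, E A /\ bounded LSX (fun x => A x /\ ~ V (f x)).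

Lemma phi_prefamily (E : family X) : is_end LSX opX E -> end_prefamily LSY opY (phi_fam E).
Proof.
  intros [[Hc Hi] _]. split.
  - intros V [H _]; auto.
  - intros V1 V2 [[u1 [o1 c1]] [A1 [HA1 b1]]] [[u2 [o2 c2]] [A2 [HA2 b2]]].
    assert (b : bounded LSX (fun x => (A1 x /\ A2 x) /\ ~ (V1 (f x) /\ V2 (f x)))).
    { apply (bnd_cover hX b1 b2).
      intros x [[a1 a2] n]. destruct (not_and_or _ _ n); auto. }
    split; [split; [|split] |].
    + intros Hb. apply (proj1 (Hc _ (Hi _ _ HA1 HA2))).
      apply (bnd_cover hX (fc Hb) b).
      intros x Ax. destruct (classic (V1 (f x) /\ V2 (f x))); auto.
    + apply (op_inter hY); auto.
    + apply (cc_inter hY); auto.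
    + exists (fun x => A1 x /\ A2 x). auto.
Qed.

(* The witness in E is the open
   thickening of f^-1(V), which meets every member of E unboundedly. *)
Lemma phi_meets (E : family X) (V : pset Y) : is_end LSX opX E ->
  end_candidate LSY opY V ->
  (forall W, phi_fam E W -> ~ bounded LSY (fun y => V y /\ W y)) -> phi_fam E V.
Proof.
  intros HE HV Hmeet. split; auto. destruct HV as [Vu [Vo Vcc]].
  destruct hX as [_ [_ [[U0 [HU0 HU0o]] _]]].
  pose proof (preimage_cc fl fc Vcc) as fcc.
  exists (st (fun x => V (f x)) U0). split; [| apply (st_diff hX); auto].
  apply (end_meets hX); auto.
  - split; [| split].
    + intros Hb. apply (unbounded_preimage Vu Vcc). apply (bnd_sub Hb).
      intros x Vx. apply (st_sup hX); auto.
    + apply (thick_open hX); auto.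
    + apply (thick_cc hX); auto.
  - intros B HB Hb.
    (* otherwise B /\ f^-1(V) is bounded, and the transport W of B would be a
       member of phi(E) meeting V boundedly *)
    assert (HBV : bounded LSX (fun x => B x /\ V (f x))).
    { apply (bnd_sub Hb). intros x [Bx Vx]. split; auto. apply (st_sup hX); auto. }
    destruct (transport (proj1 (proj1 HE) B HB)) as [W [HW [bBW bWB]]].
    apply (Hmeet W); [split; eauto |].
    assert (HVB : bounded LSY (fun y => V y /\ B (g y))).
    { apply (bnd_cover hY (gc HBV) (close_id_diff cfg Vcc)).
      intros y [Vy By]. destruct (classic (V (f (g y)))); [left | right]; auto. }
    apply (bnd_cover hY bWB HVB).
    intros y [Vy Wy]. destruct (classic (B (g y))); [right | left]; auto.
Qed.

Lemma phi_end (E : family X) : is_end LSX opX E -> is_end LSY opY (phi_fam E).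
Proof.
  intros HE. apply end_of_meets; [apply phi_prefamily; auto |].
  intros V HV Hmeet. apply phi_meets; auto.
Qed.

Definition phi_map (E : Ends LSX opX) : Ends LSY opY :=
  exist _ (phi_fam (proj1_sig E)) (phi_end (proj2_sig E)).

(* phi is continuous: if V is in phi(E), witnessed by A in E, the basic open
   set {E' : A in E'} is mapped into {E'' : V in E''}. *)
Lemma phi_cont : continuous_wrt (@ends_open X LSX opX) (@ends_open Y LSY opY) phi_map.
Proof.
  intros W HW E HE. destruct (HW _ HE) as [V [Vo [Vcc [[Vc [A [HA bA]]] HV]]]].
  destruct (proj1 (proj1 (proj2_sig E)) A HA) as [_ [Ao Acc]].
  exists A. repeat split; auto.
  intros E' HE'. apply HV. split; auto. exists A; auto.
Qed.

End Transport.

(* phi_g undoes phi_f: every A in E is, by transport, witnessed in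
   phi_g (phi_f E), and ends are maximal. *)
Lemma phi_roundtrip (X Y : Type) (LSX : pset (family X)) (opX : pset X -> Prop)
  (LSY : pset (family Y)) (opY : pset Y -> Prop)
  (hX : top_coarse_space LSX opX) (hY : top_coarse_space LSY opY)
  (f : X -> Y) (g : Y -> X)
  (fc : coarse_map LSX LSY f) (gc : coarse_map LSY LSX g) (gl : ls_continuous LSY LSX g)
  (cgf : close_maps LSX (fun x => g (f x)) (fun x => x))
  (E : family X) (HE : is_end LSX opX E)
  (HE1 : is_end LSY opY (phi_fam LSX LSY opY f E)) :
  phi_fam LSY LSX opX g (phi_fam LSX LSY opY f E) = E.
Proof.
  apply (end_sub_eq HE (phi_prefamily hY hX gc HE1)).
  intros A HA. pose proof (proj1 (proj1 HE) A HA) as HAc.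
  destruct (transport hX hY fc gc gl cgf HAc) as [W [HW [bAW bWA]]].
  split; auto. exists W. split; auto. split; eauto.
Qed.

Theorem corollary6p15 (X Y : Type)
  (LSX : pset (family X)) (opX : pset X -> Prop)
  (LSY : pset (family Y)) (opY : pset Y -> Prop)
  (hX : top_coarse_space LSX opX) (hY : top_coarse_space LSY opY)
  (hXY : coarsely_equivalent LSX LSY) :
  homeomorphic (@ends_open X LSX opX) (@ends_open Y LSY opY).
Proof.
  destruct hXY as [f [g [fc [fl [gc [gl [cgf cfg]]]]]]].
  exists (phi_map hX hY fc fl gc gl cgf cfg), (phi_map hY hX gc gl fc fl cfg cgf).
  split; [| split; [| split]].
  - intros [E HE]. apply subset_eq_compat.
    exact (phi_roundtrip hX hY fc gc gl cgf HE (phi_end hX hY fc fl gc gl cgf cfg HE)).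
  - intros [E HE]. apply subset_eq_compat.
    exact (phi_roundtrip hY hX gc fc fl cfg HE (phi_end hY hX gc gl fc fl cfg cgf HE)).
  - apply phi_cont.
  - apply phi_cont.
Qed.
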